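(* Let $\alpha=(\alpha_\pi)_{\pi\in\mathcal P}$ and $\beta=(\beta_\pi)_{\pi\in\mathcal P}$ be admissible families of weights. Then $\alpha=\beta$ if and only if $\alpha_\sigma=\beta_\sigma$ for every partition $\sigma\in\mathcal P$ with exactly two blocks.
   Context: Fix a finite set $\mathcal F$ of faces. For a word $\mathbf f\in\mathcal F^n$ ($n\ge1$), $[n]_{\mathbf f}$ is $\{1,\dots,n\}$ with faces $\ell\mapsto\mathbf f(\ell)$ (elements are called legs); $\mathcal P(\mathbf f)$ is the set of set partitions of $[n]$, viewed with these faces, and $\mathcal P=\bigcup_{\mathbf f}\mathcal P(\mathbf f)$. A finite totally ordered set $S$ with a face map is identified with $[m]_{|S|}$ through the order-preserving bijection ($|S|$ = word of faces read in order), so partitions of such sets (e.g. of a subset of $[n]$ with restricted faces, or of a quotient) are elements of $\mathcal P$. $1_{\mathbf f}$ is the one-block partition. For blocks $\beta_1\ne\beta_2$ of $\pi$, $\pi_{\beta_1\smile\beta_2}=(\pi\setminus\{\beta_1,\beta_2\})\cup\{\beta_1\cup\beta_2\}$, and $\{\beta_1,\beta_2\}$ is regarded as a partition of the multi-faced set $\beta_1\cup\beta_2$. Reduction: for $\pi\in\mathcal P(\mathbf f)$ let $s\sim t$ ($s\le t$) iff all $r\in[s,t]$ have the same face and lie in the same block; $\pi_{\mathrm{red}}$ is the induced partition of the quotient $[n]/\sim$ (classes are intervals, ordered naturally, with their common face). Mirror: $\overline{\mathbf f}(i)=\mathbf f(n+1-i)$, $\overline\pi=\{\{n+1-i:i\in\beta\}:\beta\in\pi\}\in\mathcal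 P(\overline{\mathbf f})$. A family $\alpha=(\alpha_\pi)_{\pi\in\mathcal P}$ of complex numbers is admissible if: (i) $\alpha_{1_{\mathbf f}}=1$ for all $\mathbf f$; (ii) $\alpha_{\{\{1\},\{2\}\}}=1$ for every $\mathbf f\in\mathcal F^2$; (iii) $\alpha_\pi=\alpha_{\pi_{\mathrm{red}}}$; (iv) if $\pi\in\mathcal P(\mathbf f)$ has blocks $\beta_1\ne\beta_2$ with $i\in\beta_1$, $i+1\in\beta_2$, $\mathbf f(i)=\mathbf f(i+1)$, then $\alpha_\pi=\alpha_{\pi_{\beta_1\smile\beta_2}}\alpha_{\{\beta_1,\beta_2\}}$; (v) $\alpha_\pi=\alpha_\sigma$ whenever $\pi\in\mathcal P(\mathbf f)$, $\sigma\in\mathcal P(\mathbf g)$ have the same underlying set partition of $[n]$ and $\mathbf f(\ell)=\mathbf g(\ell)$ for $1<\ell<n$; (vi) $\alpha_{\overline\pi}=\overline{\alpha_\pi}$. *)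

From mathcomp Require Import all_boot all_order all_algebra.
From mathcomp.real_closed Require Import complex.
From mathcomp Require Import Rstruct.
Set Implicit Arguments.
Unset Strict Implicit.
Unset Printing Implicit Defensive.
Import GRing.Theory Num.Theory.
Local Open Scope ring_scope.

Definition Cc : numClosedFieldType := (Rdefinitions.R)[i].

Section Partitions.
Variable F : finType. (* the finite set of faces *)

(** A word f in F^n is a finite function 'I_n -> F (position i is the
    (i+1)-th leg); a set partition of [n] is P : {set {set 'I_n}} with
    [partition P [set: 'I_n]]. The pair (f, P) is an element of P(f). *)
Definition is_part (n : nat) (P : {set {set 'I_n}}) : bool :=
  partition P [set: 'I_n].

(** A family of weights indexed by all (n, f, pi). Only the values at
    n >= 1 and pi a set partition of [n] are meaningful. *)
Definition weights := forall n : nat, {ffun 'I_n -> F} -> {set {set 'I_n}} -> Cc.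

Definition pullf (m n : nat) (g : 'I_m -> 'I_n) (f : {ffun 'I_n -> F})
  : {ffun 'I_m -> F} := [ffun k => f (g k)].
Definition pull (m n : nat) (g : 'I_m -> 'I_n) (P : {set {set 'I_n}})
  : {set {set 'I_m}} := [set [set k : 'I_m | g k \in B] | B : {set 'I_n} in P] :\ set0.

(** order-preserving bijection [m]_{|S|} -> S for a subset S of [n] *)
Definition sub_emb (n : nat) (S : {set 'I_n}) : 'I_#|S| -> 'I_n :=
  fun k => enum_val k.
Arguments sub_emb {n} S k.

(** i starts a ~-class iff it is not the case that i-1 exists with the same
    face and in the same block as i. Classes of ~ are maximal intervals, and
    each is represented by its first element. *)
Definition red_start (n : nat) (f : {ffun 'I_n -> F}) (P : {set {set 'I_n}})
  (i : 'I_n) : bool :=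
  ~~ [exists j : 'I_n, [&& (j.+1 == i :> nat), f j == f i &
                           pblock P j == pblock P i]].
Definition red_set (n : nat) (f : {ffun 'I_n -> F}) (P : {set {set 'I_n}})
  : {set 'I_n} := [set i | red_start f P i].
Definition red_map (n : nat) (f : {ffun 'I_n -> F}) (P : {set {set 'I_n}})
  : 'I_#|red_set f P| -> 'I_n := sub_emb (red_set f P).

Definition merge (n : nat) (P : {set {set 'I_n}}) (b1 b2 : {set 'I_n})
  : {set {set 'I_n}} := (P :\ b1 :\ b2) :|: [set b1 :|: b2].

Arguments is_part {n} P.
Arguments pullf {m n} g f.
Arguments pull {m n} g P.
Arguments red_start {n} f P i.
Arguments red_set {n} f P.
Arguments red_map {n} f P _.
Arguments merge {n} P b1 b2.

Definition admissible (a : weights) : Prop :=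
  (* (i) *)
  (forall (n : nat) (f : {ffun 'I_n -> F}), (0 < n)%N -> a n f [set setT] = 1)
  /\
  (forall f : {ffun 'I_2 -> F}, a 2 f [set [set ord0]; [set ord_max]] = 1)
  /\
  (* (iii) *)
  (forall (n : nat) (f : {ffun 'I_n -> F}) (P : {set {set 'I_n}}),
     (0 < n)%N -> is_part P ->
     a n f P = a _ (pullf (red_map f P) f) (pull (red_map f P) P))
  /\
  (* (iv) *)
  (forall (n : nat) (f : {ffun 'I_n -> F}) (P : {set {set 'I_n}})
          (b1 b2 : {set 'I_n}) (i j : 'I_n),
     (0 < n)%N -> is_part P -> b1 \in P -> b2 \in P -> b1 != b2 ->
     i \in b1 -> j \in b2 -> (j : nat) = i.+1 -> f i = f j ->
     a n f P = a n f (merge P b1 b2) *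
               a _ (pullf (sub_emb (b1 :|: b2)) f)
                   (pull (sub_emb (b1 :|: b2)) [set b1; b2]))
  /\
  (* (v) : positions 2..n-1 (1-based) are positions 1..n-2 (0-based) *)
  (forall (n : nat) (f g : {ffun 'I_n -> F}) (P : {set {set 'I_n}}),
     (0 < n)%N -> is_part P ->
     (forall l : 'I_n, (0 < l)%N -> (l < n.-1)%N -> f l = g l) ->
     a n f P = a n g P)
  /\
  (forall (n : nat) (f : {ffun 'I_n -> F}) (P : {set {set 'I_n}}),
     (0 < n)%N -> is_part P ->
     a n (pullf (@rev_ord n) f) (pull (@rev_ord n) P) = (a n f P)^*).

End Partitions.

From Pilot Require Import Defs.
From mathcomp Require Import all_boot all_order all_algebra.

(* Induction on the number of legs and, for a fixed number of legs, on the
   number of blocks.  By (v) the first leg may be given the face of the second.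
   If the first two legs then lie in one block, the reduction (iii) identifies
   them and lowers the number of legs; otherwise (iv) factors the weight into
   the weight of the partition with their two blocks merged, which has one
   block fewer, and a two-block weight.  Partitions with at most two blocks
   are covered by (i) and the hypothesis. *)

Set Implicit Arguments.
Unset Strict Implicit.
Unset Printing Implicit Defensive.

Section Partitions.
Variable T : finType.
Implicit Types (P : {set {set T}}) (D : {set T}).

Lemma card_partition_le P D : partition P D -> #|P| <= #|D|.
Proof.
move=> partP; rewrite (card_partition partP) -sum1_card.
by apply: leq_sum => B PB; rewrite card_gt0 (partition_neq0 partP PB).
Qed.

Lemma partition_pair P D c1 c2 :
  partition P D -> c1 \in P -> c2 \in P -> c1 != c2 ->
  partition [set c1; c2] (c1 :|: c2).
Proof.
move=> partP Pc1 Pc2 c12.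
have partc2 : partition [set c2] c2.
  rewrite /partition cover1 eqxx trivIset1 inE eq_sym.
  exact: partition_neq0 partP Pc2.
apply: partitionU1 partc2 (partition_neq0 partP Pc1) _.
exact: (trivIsetP (partition_trivIset partP)).
Qed.

End Partitions.

Section Merge.
Variable n : nat.
Implicit Types (P : {set {set 'I_n}}) (D : {set 'I_n}).

Lemma partition_merge P D b1 b2 :
  partition P D -> b1 \in P -> b2 \in P -> b1 != b2 ->
  partition (Defs.merge P b1 b2) D.
Proof.
move=> partP Pb1 Pb2 b12.
have Pb2' : b2 \in P :\ b1 by rewrite !inE eq_sym b12.
have partP' := partitionD1 (partitionD1 partP Pb1) Pb2'.
have b12_neq0 : b1 :|: b2 != set0.
  by rewrite -card_gt0 (leq_trans _ (subset_leq_card (subsetUl _ _))) ?card_gt0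
             ?(partition_neq0 partP Pb1).
have disb12 : [disjoint b1 :|: b2 & D :\: b1 :\: b2].
  rewrite -setI_eq0; apply/eqP/setP => x; rewrite !inE.
  by case: (x \in b1); case: (x \in b2).
have := partitionU1 partP' b12_neq0 disb12.
have /subsetP b1D := partitionS partP Pb1.
have /subsetP b2D := partitionS partP Pb2.
have -> : b1 :|: b2 :|: (D :\: b1 :\: b2) = D.
  apply/setP => x; rewrite !inE.
  case xb1: (x \in b1); first by rewrite b1D ?xb1.
  by case xb2: (x \in b2); rewrite //= b2D ?xb2.
by rewrite /Defs.merge setUC.
Qed.

Lemma card_merge_lt P b1 b2 :
  b1 \in P -> b2 \in P -> b1 != b2 -> #|Defs.merge P b1 b2| < #|P|.
Proof.
move=> Pb1 Pb2 b12.
rewrite /Defs.merge (cardsD1 b1 P) Pb1 (cardsD1 b2 (P :\ b1)).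
rewrite !inE eq_sym b12 Pb2 /=.
by rewrite (leq_ltn_trans (leq_card_setU _ _)) // cards1 addn1.
Qed.

End Merge.

Lemma partition_pull m n (g : 'I_m -> 'I_n) (P : {set {set 'I_n}}) D :
  partition P D -> (forall k, g k \in D) -> is_part (pull g P).
Proof.
move=> partP gD; apply/and3P; split.
- apply/eqP/setP => k; rewrite in_setT; apply/bigcupP.
  have /bigcupP[B PB gkB] : g k \in cover P by rewrite (cover_partition partP).
  exists [set k0 | g k0 \in B]; last by rewrite inE.
  rewrite !inE; apply/andP; split; first by apply/set0Pn; exists k; rewrite inE.
  exact: imset_f.
- apply/trivIsetP => A A' /setD1P[_ /imsetP[B PB ->]].
  move=> /setD1P[_ /imsetP[B' PB' ->]] neqB.
  have BB' : B != B' by apply: contraNneq neqB => ->.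
  have := trivIsetP (partition_trivIset partP) B B' PB PB' BB'.
  rewrite -!setI_eq0 => /eqP disB; apply/eqP/setP => k; rewrite !inE.
  apply/negP => /andP[kB kB'].
  by have := in_set0 (g k); rewrite -disB inE kB kB'.
- by rewrite setD11.
Qed.

Lemma card_pull m n (g : 'I_m -> 'I_n) (P : {set {set 'I_n}}) :
  trivIset P -> {in P, forall B : {set 'I_n}, exists k, g k \in B} ->
  #|pull g P| = #|P|.
Proof.
move=> trivP gP.
have pre_neq0 B : B \in P -> [set k | g k \in B] != set0.
  by move=> /gP[k gkB]; apply/set0Pn; exists k; rewrite inE.
rewrite /pull (setDidPl _); last first.
  rewrite disjoint_sym disjoints1.
  by apply/imsetP => -[B /pre_neq0 + eqB]; rewrite -eqB eqxx.
apply: card_in_imset => B B' PB PB' eqBB'; apply/eqP; apply: contraT => BB'.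
have [k gkB] := gP B PB.
have gkB' : g k \in B' by move/setP/(_ k): eqBB'; rewrite !inE gkB.
have := trivIsetP trivP B B' PB PB' BB'.
rewrite -setI_eq0 => /eqP/setP/(_ (g k)).
by rewrite !inE gkB gkB'.
Qed.

Lemma sub_emb_onto n (S : {set 'I_n}) x :
  x \in S -> exists k, @sub_emb _ S k = x.
Proof.
by move=> Sx; exists (enum_rank_in Sx x); rewrite /sub_emb enum_rankK_in.
Qed.

Lemma partition_pull_sub_emb n (S : {set 'I_n}) (Q : {set {set 'I_n}}) :
  partition Q S -> is_part (pull (@sub_emb _ S) Q).
Proof. by move=> partQ; apply: (partition_pull partQ) => k; exact: enum_valP. Qed.

Lemma card_pull_sub_emb n (S : {set 'I_n}) (Q : {set {set 'I_n}}) :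
  partition Q S -> #|pull (@sub_emb _ S) Q| = #|Q|.
Proof.
move=> partQ; rewrite card_pull ?(partition_trivIset partQ) // => B QB.
have /set0Pn[x Bx] := partition_neq0 partQ QB.
have [k kx] := sub_emb_onto (subsetP (partitionS partQ QB) x Bx).
by exists k; rewrite kx.
Qed.

Section Reduction.
Variables (F : finType) (n : nat) (f : {ffun 'I_n -> F}) (P : {set {set 'I_n}}).

Lemma red_set_gt0 : 0 < n -> 0 < #|red_set f P|.
Proof.
move=> n0; apply/card_gt0P; exists (Ordinal n0).
by rewrite inE /red_start; apply/existsP => -[j /and3P[]].
Qed.

Lemma card_red_set_lt (i j : 'I_n) :
  j = i.+1 :> nat -> f i = f j -> pblock P i = pblock P j -> #|red_set f P| < n.
Proof.
move=> ji fij Pij.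
have jNred : j \notin red_set f P.
  by rewrite inE negbK; apply/existsP; exists i; rewrite ji fij Pij !eqxx.
rewrite -[n in _ < n]card_ord -cardsT; apply: proper_card.
by rewrite properT; apply: contraNneq jNred => ->; rewrite inE.
Qed.

End Reduction.

Section Uniqueness.
(* Otherwise the leg count of [alpha] and [beta] becomes implicit. *)
Local Unset Implicit Arguments.
Variables (F : finType) (alpha beta : weights F).
Hypotheses (adm_alpha : admissible alpha) (adm_beta : admissible beta).
Hypothesis agree2 : forall n (f : {ffun 'I_n -> F}) (P : {set {set 'I_n}}),
  0 < n -> is_part P -> #|P| = 2 -> alpha n f P = beta n f P.

Lemma agree_card_le2 n (f : {ffun 'I_n -> F}) (P : {set {set 'I_n}}) :
  0 < n -> is_part P -> #|P| <= 2 -> alpha n f P = beta n f P.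
Proof.
move=> n0 partP; rewrite leq_eqVlt ltnS leq_eqVlt ltnS leqn0.
case/or3P=> /eqP cardP; first exact: agree2.
- have /cards1P[B defP] : #|P| == 1 by rewrite cardP.
  have defB : B = setT by move: (cover_partition partP); rewrite defP cover1.
  case: adm_alpha => [one _]; case: adm_beta => [one' _].
  by rewrite defP defB one ?one'.
- have := cover_partition partP; rewrite (cards0_eq cardP) /cover big_set0.
  by move/setP/(_ (Ordinal n0)); rewrite !inE.
Qed.

Lemma agree_joined_adjacent n (f : {ffun 'I_n -> F}) (P : {set {set 'I_n}})
    (i j : 'I_n) :
  (forall m (f' : {ffun 'I_m -> F}) (P' : {set {set 'I_m}}),
     0 < m -> m < n -> is_part P' -> alpha m f' P' = beta m f' P') ->
  is_part P -> j = i.+1 :> nat -> f i = f j -> pblock P i = pblock P j ->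
  alpha n f P = beta n f P.
Proof.
move=> agree_lt partP ji fij Pij.
have n0 : 0 < n := leq_ltn_trans (leq0n i) (ltn_ord i).
case: adm_alpha => [_ [_ [red _]]]; case: adm_beta => [_ [_ [red' _]]].
rewrite red // red' //; apply: agree_lt.
- exact: red_set_gt0.
- exact: card_red_set_lt fij Pij.
- by apply: (partition_pull partP) => k; rewrite inE.
Qed.

Lemma agree_split_adjacent n (f : {ffun 'I_n -> F}) (P : {set {set 'I_n}})
    (i j : 'I_n) :
  (forall Q : {set {set 'I_n}}, is_part Q -> #|Q| < #|P| ->
     alpha n f Q = beta n f Q) ->
  is_part P -> j = i.+1 :> nat -> f i = f j -> pblock P i != pblock P j ->
  alpha n f P = beta n f P.
Proof.
move=> agree_fewer partP ji fij Pij.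
have n0 : 0 < n := leq_ltn_trans (leq0n i) (ltn_ord i).
have coverP := cover_partition partP.
have Pi : pblock P i \in P by rewrite pblock_mem ?coverP.
have Pj : pblock P j \in P by rewrite pblock_mem ?coverP.
have iPi : i \in pblock P i by rewrite mem_pblock coverP.
have jPj : j \in pblock P j by rewrite mem_pblock coverP.
case: adm_alpha => [_ [_ [_ [mrg _]]]]; case: adm_beta => [_ [_ [_ [mrg' _]]]].
rewrite (mrg _ _ _ _ _ _ _ n0 partP Pi Pj Pij iPi jPj ji fij).
rewrite (mrg' _ _ _ _ _ _ _ n0 partP Pi Pj Pij iPi jPj ji fij).
rewrite agree_fewer; [|exact: partition_merge | exact: card_merge_lt].
rewrite agree2 //.
- by apply/card_gt0P; exists i; rewrite inE iPi.
- exact/partition_pull_sub_emb/(partition_pair partP).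
- by rewrite card_pull_sub_emb ?cards2 ?Pij // (partition_pair partP).
Qed.

Lemma agree_all n (f : {ffun 'I_n -> F}) (P : {set {set 'I_n}}) :
  0 < n -> is_part P -> alpha n f P = beta n f P.
Proof.
elim/ltn_ind: n f P => n agree_lt f P n0 partP.
have [k] := ubnP #|P|; elim: k => // k agree_fewer in f P partP *.
rewrite ltnS => Pk.
have [|gt2] := leqP #|P| 2; first exact: agree_card_le2.
have n1 : 1 < n.
  rewrite -[n]card_ord -cardsT.
  exact: ltn_trans (leq_trans gt2 (card_partition_le partP)).
pose i0 := Ordinal n0; pose i1 := Ordinal n1.
pose g := [ffun l => if l == i0 then f i1 else f l].
have interior_fg (l : 'I_n) : 0 < l -> l < n.-1 -> f l = g l.
  by move=> l_gt0 _; rewrite ffunE ifN // -val_eqE /= -lt0n.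
have g01 : g i0 = g i1 by rewrite !ffunE eqxx; case: (i1 == i0).
case: adm_alpha => [_ [_ [_ [_ [faces _]]]]].
case: adm_beta => [_ [_ [_ [_ [faces' _]]]]].
rewrite (faces _ _ g) // (faces' _ _ g) //.
have [Pi01|Pi01] := eqVneq (pblock P i0) (pblock P i1).
- apply: (agree_joined_adjacent _ _ _ i0 i1) => // m f' P' m0 mn.
  exact: agree_lt.
- apply: (agree_split_adjacent _ _ _ i0 i1) => // Q partQ QP.
  by apply: agree_fewer => //; apply: leq_trans QP Pk.
Qed.

End Uniqueness.

Theorem lemma6p3 (F : finType) (alpha beta : weights F) :
  admissible alpha -> admissible beta ->
  ((forall (n : nat) (f : {ffun 'I_n -> F}) (P : {set {set 'I_n}}),
      (0 < n)%N -> is_part P -> alpha n f P = beta n f P)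
   <->
   (forall (n : nat) (f : {ffun 'I_n -> F}) (P : {set {set 'I_n}}),
      (0 < n)%N -> is_part P -> (#|P| = 2)%N -> alpha n f P = beta n f P)).
Proof.
move=> adm_alpha adm_beta; split=> [agree n f P n0 partP _ | agree2 n f P].
  exact: agree.
exact: agree_all.
Qed.
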